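(* Let $C\subseteq\mathbb{R}^d$ be a closed cone and let $\bar z\in C$. Then \[\operatorname{Lsp}(C)+[\bar z]\subseteq\operatorname{Lsp}(T_C(\bar z)).\]
   Context: For a cone $C\subseteq\mathbb{R}^d$, $\operatorname{Lsp}(C)$ denotes the largest linear subspace $L\subseteq\mathbb{R}^d$ such that $C+L\subseteq C$ (this is well defined). For $z\in\mathbb{R}^d$, $[z]=\{\alpha z\mid\alpha\in\mathbb{R}\}$. $T_C(\bar z)=\{w\mid \exists t_k\downarrow 0,\ w_k\to w \text{ with } \bar z+t_kw_k\in C\ \forall k\}$ is the tangent (contingent) cone. *)

From HB Require Import structures.
From mathcomp Require Import all_boot all_order all_algebra.
From mathcomp Require Import all_classical all_reals all_analysis.
Set Implicit Arguments. Unset Strict Implicit. Unset Printing Implicit Defensive.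
Import Order.TTheory GRing.Theory Num.Theory.
Import numFieldNormedType.Exports.
Local Open Scope classical_set_scope.
Local Open Scope ring_scope.

Definition is_cone (R : realType) (d : nat) (C : set 'rV[R]_d) : Prop :=
  forall (t : R) (x : 'rV[R]_d), 0 < t -> C x -> C (t *: x).

Definition is_linear_subspace (R : realType) (d : nat) (L : set 'rV[R]_d) : Prop :=
  L 0 /\ (forall x y, L x -> L y -> L (x + y)) /\
  (forall (a : R) x, L x -> L (a *: x)).

(* Lsp C: the largest linear subspace L with C + L ⊆ C, realized as the set
   of vectors lying in some linear subspace L with C + L ⊆ C (this union is
   itself such a subspace, hence the largest one). *)
Definition Lsp (R : realType) (d : nat) (C : set 'rV[R]_d) : set 'rV[R]_d :=
  [set v | exists L : set 'rV[R]_d,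
     [/\ is_linear_subspace L,
         (forall c l, C c -> L l -> C (c + l)) & L v]].

Definition tangent_cone (R : realType) (d : nat) (C : set 'rV[R]_d)
    (zbar : 'rV[R]_d) : set 'rV[R]_d :=
  [set w | exists (t : nat -> R) (wk : nat -> 'rV[R]_d),
     [/\ (forall k, 0 < t k), t @ \oo --> (0 : R), wk @ \oo --> w &
         forall k, C (zbar + t k *: wk k)]].

From mathcomp Require Import all_boot all_order all_algebra.
From mathcomp Require Import all_classical all_reals all_analysis.
Import Order.TTheory GRing.Theory Num.Theory.
Import numFieldNormedType.Exports.
Local Open Scope classical_set_scope.
Local Open Scope ring_scope.

(* Translating a tangent direction w by l in a lineality subspace keeps the
   approximating points z + t_k (w_k + l) = (z + t_k w_k) + t_k l inside C.
   Translating it by b z uses the cone property instead: the points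
   z + t_k ((1 + t_k b) w_k + b z) = (1 + t_k b) (z + t_k w_k) lie in C as soon
   as 1 + t_k b > 0, which holds eventually since t_k -> 0. *)

Section TangentCone.
Context {R : realType} {d : nat}.
Implicit Types (C L : set 'rV[R]_d) (z w : 'rV[R]_d).

Definition add_line L z : set 'rV[R]_d := [set l + b *: z | l in L & b in [set: R]].

Lemma linear_subspace_add_line L z :
  is_linear_subspace L -> is_linear_subspace (add_line L z).
Proof.
move=> [L0 [LD LZ]]; split.
  by exists 0 => //; exists 0 => //; rewrite scale0r addr0.
split.
- move=> _ _ [l1 Ll1 [b1 _ <-]] [l2 Ll2 [b2 _ <-]].
  exists (l1 + l2); first exact: LD.
  by exists (b1 + b2) => //; rewrite scalerDl addrACA.
- move=> c _ [l Ll [b _ <-]]; exists (c *: l); first exact: LZ.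
  by exists (c * b) => //; rewrite scalerDr scalerA.
Qed.

Lemma tangent_cone_near C z w (t : nat -> R) (wk : nat -> 'rV[R]_d) :
  (forall k, 0 < t k) -> t @ \oo --> 0 -> wk @ \oo --> w ->
  (\forall k \near \oo, C (z + t k *: wk k)) -> tangent_cone C z w.
Proof.
move=> tpos tcvg wcvg [N _ CN].
exists (fun k => t (k + N)%N), (fun k => wk (k + N)%N); split => //.
- by rewrite (cvg_shiftn N t).
- by rewrite (cvg_shiftn N wk).
- by move=> k; apply: CN; rewrite /= leq_addl.
Qed.

Lemma tangent_cone_addr C L z w l :
  (forall c l, C c -> L l -> C (c + l)) ->
  (forall (a : R) l, L l -> L (a *: l)) ->
  tangent_cone C z w -> L l -> tangent_cone C z (w + l).
Proof.
move=> CL LZ [t [wk [tpos tcvg wcvg Cwk]]] Ll.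
exists t, (fun k => wk k + l); split => //.
- exact: cvgD wcvg (cvg_cst l).
- by move=> k; rewrite scalerDr addrA; apply: CL; [exact: Cwk | exact: LZ].
Qed.

Lemma tangent_cone_add_base C z w (b : R) :
  is_cone C -> tangent_cone C z w -> tangent_cone C z (w + b *: z).
Proof.
move=> coneC [t [wk [tpos tcvg wcvg Cwk]]].
have scvg : (fun k => 1 + t k * b) @ \oo --> (1 : R).
  rewrite -[X in _ --> X]addr0 -(mul0r b).
  by apply: cvgD; [exact: cvg_cst | exact: cvgM tcvg (cvg_cst b)].
apply: (tangent_cone_near C z (w + b *: z) t
         (fun k => (1 + t k * b) *: wk k + b *: z) tpos tcvg).
  by apply: cvgD; [rewrite -[w]scale1r; exact: cvgZ | exact: cvg_cst].
near=> k.
have -> : z + t k *: ((1 + t k * b) *: wk k + b *: z)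
    = (1 + t k * b) *: (z + t k *: wk k).
  rewrite !scalerDr !scalerA [_ * t k]mulrC scalerDl scale1r -addrA.
  by congr (_ + _); rewrite addrC.
by apply: coneC; [near: k; exact: cvgr_gt 1 scvg 0 ltr01 | exact: Cwk].
Unshelve. all: by end_near.
Qed.

End TangentCone.

Theorem lemma2p8 (R : realType) (d : nat) (C : set 'rV[R]_d) (zbar : 'rV[R]_d) :
  closed C -> is_cone C -> C zbar ->
  forall (x : 'rV[R]_d) (a : R),
    Lsp C x -> Lsp (tangent_cone C zbar) (x + a *: zbar).
Proof.
move=> _ coneC _ x a [L [subL CL Lx]].
exists (add_line L zbar); split.
- exact: linear_subspace_add_line.
- move=> w _ Tw [l Ll [b _ <-]].
  rewrite addrA; apply: tangent_cone_add_base => //.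
  exact: tangent_cone_addr CL subL.2.2 Tw Ll.
- by exists x => //; exists a.
Qed.
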